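(* Let $\mathrm{M}=\langle e_1+I,\ e_2+I,\ A\rangle$, where $e_1,e_2$ are the standard basis vectors of $E^2$ and $A=\begin{pmatrix}0&1\\1&0\end{pmatrix}$ is the linear map transposing $e_1$ and $e_2$. Then $$N_A(\mathrm{M})=\{b+B : b_1-b_2\in\mathbb Z \text{ and } B\in\langle -I, A\rangle\},$$ where $b=(b_1,b_2)$.
   Context: Affine maps of $E^2$ are written $b+B$ (meaning $x\mapsto b+Bx$, $b\in E^2$, $B\in\mathrm{GL}(2,\mathbb R)$); $b+I$ is translation by $b$. $N_A(\mathrm{M})$ denotes the normalizer of $\mathrm{M}$ in the group of affine transformations of $E^2$. (Here $\mathrm{M}$ is a 2-space group of type $\ast\times$, i.e. $cm$, and $E^2/\mathrm{M}$ is a Möbius band.) *)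

From HB Require Import structures.
From mathcomp Require Import all_boot all_order all_algebra.
From mathcomp Require Import reals.
Set Implicit Arguments. Unset Strict Implicit. Unset Printing Implicit Defensive.
Import Order.TTheory GRing.Theory Num.Theory.
Local Open Scope ring_scope.

Inductive gen (T : Type) (mul : T -> T -> T) (inv : T -> T) (one : T)
    (S : T -> Prop) : T -> Prop :=
  | gen_base x : S x -> gen mul inv one S x
  | gen_one : gen mul inv one S one
  | gen_mul x y : gen mul inv one S x -> gen mul inv one S y ->
                  gen mul inv one S (mul x y)
  | gen_inv x : gen mul inv one S x -> gen mul inv one S (inv x).

(* Affine map b + B of E^2 : x |-> b + B x (column vectors). *)
Definition aff (R : realType) := ('cV[R]_2 * 'M[R]_2)%type.

Definition aff_apply (R : realType) (g : aff R) (x : 'cV[R]_2) : 'cV[R]_2 :=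
  g.1 + g.2 *m x.
Definition aff_mul (R : realType) (g h : aff R) : aff R :=
  (g.1 + g.2 *m h.1, g.2 *m h.2).
Definition aff_inv (R : realType) (g : aff R) : aff R :=
  (- (invmx g.2 *m g.1), invmx g.2).
Definition aff_id (R : realType) : aff R := (0, 1%:M).
Definition is_affine (R : realType) (g : aff R) : Prop := g.2 \in unitmx.

(* Group generated by a set of affine maps (all generators assumed invertible). *)
Definition aff_gen (R : realType) (S : aff R -> Prop) :=
  gen (@aff_mul R) (@aff_inv R) (@aff_id R) S.
Definition mx_gen (R : realType) (S : 'M[R]_2 -> Prop) :=
  gen (@mulmx R 2 2 2) (@invmx R 2) 1%:M S.

Definition normalizer_A (R : realType) (M : aff R -> Prop) (g : aff R) : Prop :=
  is_affine g /\
  forall h, M h <-> M (aff_mul (aff_mul g h) (aff_inv g)).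

Definition e1 (R : realType) : 'cV[R]_2 := delta_mx 0 0.
Definition e2 (R : realType) : 'cV[R]_2 := delta_mx 1 0.
Definition transl (R : realType) (b : 'cV[R]_2) : aff R := (b, 1%:M).
Definition Aswap (R : realType) : 'M[R]_2 :=
  \matrix_(i < 2, j < 2) (if i == j then 0 else 1).

Definition Mcm (R : realType) : aff R -> Prop :=
  aff_gen (fun g => g = transl (e1 R) \/ g = transl (e2 R) \/ g = (0, Aswap R)).

(* M consists of the maps v + C with v in Z^2 and C in {I, A}.
   If b + B normalizes M, conjugating the translations shows that B and B^-1
   preserve Z^2, so both are integral.  The conjugate of A is
   (b - B A B^-1 b) + B A B^-1, whose linear part cannot be I, hence equals A:
   B commutes with A and b - A b lies in Z^2, i.e. b1 - b2 is an integer.  An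
   integral B commuting with A with integral inverse has eigenvalues +-1 on
   (1, 1) and (1, -1), which leaves exactly +-I and +-A.  Conversely these B
   satisfy B C B^-1 = C for C in {I, A} and preserve Z^2, while b - C b lies
   in Z^2, so conjugation by b + B maps M onto itself. *)

From mathcomp Require Import all_boot all_order all_algebra.
From mathcomp Require Import reals lra.
Import Order.TTheory GRing.Theory Num.Theory.
Set Implicit Arguments. Unset Strict Implicit.
Local Open Scope ring_scope.

Lemma ord2P (i : 'I_2) : i = 0 \/ i = 1.
Proof. by case: i => [[|[|//]] lt_i2]; [left | right]; apply: val_inj. Qed.

Lemma mx2_eq (T : Type) (B C : 'M[T]_2) :
  B 0 0 = C 0 0 -> B 0 1 = C 0 1 -> B 1 0 = C 1 0 -> B 1 1 = C 1 1 -> B = C.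
Proof.
move=> e00 e01 e10 e11; apply/matrixP => i j.
by case: (ord2P i) => ->; case: (ord2P j) => ->.
Qed.

Lemma mulmx2E (R : pzSemiRingType) n (B : 'M[R]_2) (C : 'M[R]_(2, n)) i j :
  (B *m C) i j = B i 0 * C 0 j + B i 1 * C 1 j.
Proof.
rewrite !mxE !big_ord_recl big_ord0 addr0.
by congr (B i _ * C _ j + B i _ * C _ j); apply: val_inj.
Qed.

Lemma mxOverN (V : zmodType) (S : zmodClosed V) m n (u : 'M[V]_(m, n)) :
  (- u \is a mxOver S) = (u \is a mxOver S).
Proof.
by apply/mxOverP/mxOverP => uS i j; move: (uS i j); rewrite mxE ?rpredN.
Qed.

Lemma mxOverDl (V : zmodType) (S : zmodClosed V) m n (u w : 'M[V]_(m, n)) :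
  u \is a mxOver S -> (u + w \is a mxOver S) = (w \is a mxOver S).
Proof.
move/mxOverP => uS; apply/mxOverP/mxOverP => wS i j;
  by move: (wS i j); rewrite mxE ?rpredDl.
Qed.

Lemma mxOver_mulmx_cV (R : pzSemiRingType) (S : semiringClosed R) m n
    (B : 'M[R]_(m, n)) :
  (forall v : 'cV[R]_n, v \is a mxOver S -> B *m v \is a mxOver S) ->
  B \is a mxOver S.
Proof.
move=> BS; apply/mxOverP => i j.
have /mxOverP/(_ i 0) : col j B \is a mxOver S.
  by rewrite colE; apply: BS; apply/mxOverP => k l; rewrite mxE rpred_nat.
by rewrite mxE.
Qed.

Lemma intr_mul_eq1 (R : archiNumDomainType) (x y : R) :
  x \is a Num.int -> y \is a Num.int -> x * y = 1 -> x = 1 \/ x = -1.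
Proof.
move=> /intrP[m ->] /intrP[n ->]; rewrite -intrM => /eqP.
rewrite -[X in _ == X](mulr1z (1 : R)) eqr_int => /eqP.
rewrite mulrC => /intUnitRing.unitzPl; rewrite unfold_in /=.
by case/orP => /eqP ->; [left | right]; rewrite ?intrN.
Qed.

Section CmNormalizer.
Variable R : realType.
Local Notation A := (Aswap R).
Local Notation aff_conj g h := (aff_mul (aff_mul g h) (aff_inv g)).

Lemma Aswap_sqr : A *m A = 1%:M.
Proof. by apply: mx2_eq; rewrite mulmx2E !mxE /=; lra. Qed.

Lemma Aswap_neq1 : A != 1%:M.
Proof. by apply/eqP => /matrixP/(_ 0 0); rewrite !mxE /=; lra. Qed.

Lemma Aswap_int : A \is a mxOver Num.int.
Proof. by apply/mxOverP => i j; rewrite mxE; case: (_ == _). Qed.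

Lemma mulmx_AswapC (B : 'M[R]_2) :
  B *m A = A *m B -> B 0 1 = B 1 0 /\ B 1 1 = B 0 0.
Proof.
move=> /matrixP BA; have := BA 0 0; have := BA 0 1.
by rewrite !mulmx2E !mxE /=; lra.
Qed.

Lemma sub_mulAswap_intE (b : 'cV[R]_2) :
  (b - A *m b \is a mxOver Num.int) = (b 0 0 - b 1 0 \is a Num.int).
Proof.
have AbE i : (b - A *m b) i 0 = b i 0 - b (if i == 0 then 1 else 0) 0.
  by case: (ord2P i) => ->; rewrite !(mulmx2E, mxE) /=; lra.
apply/mxOverP/idP => [/(_ 0 0) | b01 i j]; first by rewrite AbE.
rewrite ord1 AbE; case: (ord2P i) => -> //=.
by rewrite -opprB rpredN.
Qed.

Definition klein (B : 'M[R]_2) := [\/ B = 1%:M, B = -1%:M, B = A | B = - A].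

Lemma klein_mul B C : klein B -> klein C -> klein (B *m C).
Proof.
case=> ->; case=> ->;
  rewrite ?(mul1mx, mulmx1, mulNmx, mulmxN, opprK, Aswap_sqr);
  by [apply: Or41 | apply: Or42 | apply: Or43 | apply: Or44].
Qed.

Lemma klein_sqr B : klein B -> B *m B = 1%:M.
Proof.
by case=> ->; rewrite ?(mul1mx, mulmx1, mulNmx, mulmxN, opprK, Aswap_sqr).
Qed.

Lemma klein_AswapC B : klein B -> B *m A = A *m B.
Proof. by case=> ->; rewrite ?(mul1mx, mulmx1, mulNmx, mulmxN). Qed.

Lemma klein_unit B : klein B -> B \in unitmx.
Proof. by move/klein_sqr/mulmx1_unit => []. Qed.

Lemma klein_inv B : klein B -> invmx B = B.
Proof.
move=> kB; rewrite -[RHS]mul1mx -(mulVmx (klein_unit kB)) -mulmxA.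
by rewrite klein_sqr // mulmx1.
Qed.

Lemma klein_int B : klein B -> B \is a mxOver Num.int.
Proof.
have int1 : 1%:M \is a @mxOver 2 2 R Num.int.
  by apply: mxOver_scalar; rewrite ?rpred0 ?rpred1.
by case=> ->; rewrite ?mxOverN ?int1 ?Aswap_int.
Qed.

Lemma int_unitmx_AswapC_klein B : B \in unitmx -> B \is a mxOver Num.int ->
  invmx B \is a mxOver Num.int -> B *m A = A *m B -> klein B.
Proof.
move=> U /mxOverP BZ /mxOverP VZ /mulmx_AswapC[B01 B11].
have /matrixP BV := mulmxV U.
have := BV 0 0; have := BV 1 0; rewrite !mulmx2E !mxE /= B01 B11 => e10 e00.
have sum1 : (B 0 0 + B 1 0) * (invmx B 0 0 + invmx B 1 0) = 1 by nra.
have dif1 : (B 0 0 - B 1 0) * (invmx B 0 0 - invmx B 1 0) = 1 by nra.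
have [s|s] :=
  intr_mul_eq1 (rpredD (BZ 0 0) (BZ 1 0)) (rpredD (VZ 0 0) (VZ 1 0)) sum1;
have [d|d] :=
  intr_mul_eq1 (rpredB (BZ 0 0) (BZ 1 0)) (rpredB (VZ 0 0) (VZ 1 0)) dif1.
- by apply: Or41; apply: mx2_eq; rewrite !mxE /= ?B01 ?B11; lra.
- by apply: Or43; apply: mx2_eq; rewrite !mxE /= ?B01 ?B11; lra.
- by apply: Or44; apply: mx2_eq; rewrite !mxE /= ?B01 ?B11; lra.
- by apply: Or42; apply: mx2_eq; rewrite !mxE /= ?B01 ?B11; lra.
Qed.

Lemma klein_mulmx_intE B (v : 'cV[R]_2) : klein B ->
  (B *m v \is a mxOver Num.int) = (v \is a mxOver Num.int).
Proof.
move=> kB; apply/idP/idP => [Bv | v_int]; last by rewrite mxOverM ?klein_int.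
by rewrite -[v]mul1mx -(klein_sqr kB) -mulmxA mxOverM ?klein_int.
Qed.

Lemma mx_gen_kleinP B : mx_gen (fun C => C = -1%:M \/ C = A) B <-> klein B.
Proof.
split.
  elim=> [C [->|->] | | C D _ kC _ kD | C _ kC].
  - exact: Or42.
  - exact: Or43.
  - exact: Or41.
  - exact: klein_mul.
  - by rewrite klein_inv.
case=> ->.
- exact: gen_one.
- by apply: gen_base; left.
- by apply: gen_base; right.
- rewrite -[- A]mul1mx mulmxN -mulNmx.
  by apply: gen_mul; apply: gen_base; [left | right].
Qed.

Lemma transl_mul (u v : 'cV[R]_2) :
  aff_mul (transl u) (transl v) = transl (u + v).
Proof. by rewrite /aff_mul /transl /= mul1mx mulmx1. Qed.

Lemma transl_inv (u : 'cV[R]_2) : aff_inv (transl u) = transl (- u).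
Proof. by rewrite /aff_inv /transl /= invmx1 mul1mx. Qed.

Lemma aff_gen_transl_int S (u : 'cV[R]_2) (z : int) :
  aff_gen S (transl u) -> aff_gen S (transl (z%:~R *: u)).
Proof.
have transl_nat n : aff_gen S (transl u) -> aff_gen S (transl (n%:R *: u)).
  move=> Su; elim: n => [|n IHn]; first by rewrite scale0r; apply: gen_one.
  by rewrite mulrSr scalerDl scale1r -transl_mul; apply: gen_mul.
move=> Su; case: z => n; first exact: transl_nat.
by rewrite NegzE intrN scaleNr -transl_inv; apply/gen_inv/transl_nat.
Qed.

Lemma cV2_decomp (v : 'cV[R]_2) : v = v 0 0 *: e1 R + v 1 0 *: e2 R.
Proof.
apply/matrixP => i j; rewrite ord1 !mxE.
by case: (ord2P i) => -> /=; lra.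
Qed.

Definition cm_spec (h : aff R) :=
  h.1 \is a mxOver Num.int /\ (h.2 = 1%:M \/ h.2 = A).

Lemma Mcm_cm_spec h : Mcm h -> cm_spec h.
Proof.
have klein_cm C : C = 1%:M \/ C = A -> klein C.
  by case=> ->; [apply: Or41 | apply: Or43].
elim=> [g [-> | [-> | ->]] | | g g' _ [gZ gC] _ [g'Z g'C] | g _ [gZ gC]].
- by split; [apply/mxOverP => i j; rewrite /e1 mxE rpred_nat | left].
- by split; [apply/mxOverP => i j; rewrite /e2 mxE rpred_nat | left].
- by split; [rewrite mxOver0 ?rpred0 | right].
- by split; [rewrite mxOver0 ?rpred0 | left].
- have gK := klein_cm _ gC.
  split; first by rewrite /= mxOverDl // klein_mulmx_intE.
  rewrite /=; case: gC g'C => -> [] ->;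
    rewrite ?(mul1mx, mulmx1, Aswap_sqr); by [left | right].
- have gK := klein_cm _ gC.
  by split; rewrite /= klein_inv // ?mxOverN ?klein_mulmx_intE.
Qed.

Lemma Mcm_transl_int (v : 'cV[R]_2) :
  v \is a mxOver Num.int -> Mcm (transl v).
Proof.
move/mxOverP => vZ; rewrite [v]cV2_decomp.
have /intrP[m ->] := vZ 0 0; have /intrP[n ->] := vZ 1 0.
rewrite -transl_mul; apply: gen_mul; apply: aff_gen_transl_int; apply: gen_base.
  by left.
by right; left.
Qed.

Lemma McmP h : Mcm h <-> cm_spec h.
Proof.
split; first exact: Mcm_cm_spec.
case: h => v C [/= vZ [-> | ->]]; first exact: Mcm_transl_int.
have -> : (v, A) = aff_mul (transl v) (0, A).
  by rewrite /aff_mul /= mulmx0 addr0 mul1mx.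
by apply: gen_mul; [exact: Mcm_transl_int | apply: gen_base; right; right].
Qed.

Lemma Mcm_transl (v : 'cV[R]_2) : Mcm (transl v) <-> v \is a mxOver Num.int.
Proof. by split=> [/McmP[] | /Mcm_transl_int]. Qed.

Lemma aff_conjE (b : 'cV[R]_2) (B : 'M[R]_2) (h : aff R) :
  aff_conj (b, B) h =
  (b + B *m h.1 - B *m h.2 *m invmx B *m b, B *m h.2 *m invmx B).
Proof. by rewrite /aff_mul /aff_inv /= mulmxN !mulmxA. Qed.

Lemma aff_conj_transl (b v : 'cV[R]_2) (B : 'M[R]_2) : B \in unitmx ->
  aff_conj (b, B) (transl v) = transl (B *m v).
Proof.
move=> U; rewrite aff_conjE /= mulmx1 mulmxV // mul1mx.
by rewrite addrAC subrr add0r.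
Qed.

Lemma normalizer_mulmx_intE (b v : 'cV[R]_2) (B : 'M[R]_2) :
  normalizer_A (@Mcm R) (b, B) ->
  (B *m v \is a mxOver Num.int) = (v \is a mxOver Num.int).
Proof.
case=> U N; apply/idP/idP => [Bv | v_int].
  by apply/Mcm_transl/N; rewrite aff_conj_transl //; apply/Mcm_transl.
apply/Mcm_transl; rewrite -(aff_conj_transl b) //.
by apply/(N (transl v))/Mcm_transl.
Qed.

Lemma normalizer_int (b : 'cV[R]_2) (B : 'M[R]_2) :
  normalizer_A (@Mcm R) (b, B) ->
  B \is a mxOver Num.int /\ invmx B \is a mxOver Num.int.
Proof.
move=> gN; have [U _] := gN.
split; apply: mxOver_mulmx_cV => v v_int.
  by rewrite (normalizer_mulmx_intE _ gN).
by rewrite -(normalizer_mulmx_intE _ gN) mulmxA mulmxV // mul1mx.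
Qed.

Lemma normalizer_AswapC (b : 'cV[R]_2) (B : 'M[R]_2) :
  normalizer_A (@Mcm R) (b, B) ->
  B *m A = A *m B /\ b - A *m b \is a mxOver Num.int.
Proof.
case=> U N; have /N : Mcm (0, A) by apply: gen_base; right; right.
rewrite aff_conjE /= mulmx0 addr0 => /McmP[/= bZ [BA1 | BAA]].
  have : A = invmx B *m (B *m A *m invmx B) *m B.
    by rewrite !mulmxA mulVmx // mul1mx -mulmxA mulVmx // mulmx1.
  by rewrite BA1 mulmx1 mulVmx // => /eqP; rewrite (negbTE Aswap_neq1).
split; last by rewrite -BAA.
by rewrite -[in RHS]BAA -mulmxA mulVmx // mulmx1.
Qed.

Lemma klein_conj_Aswap B : klein B -> B *m A *m B = A.
Proof. by move=> kB; rewrite klein_AswapC // -mulmxA klein_sqr // mulmx1. Qed.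

Lemma klein_conj_cm B C : klein B ->
  (B *m C *m B = 1%:M \/ B *m C *m B = A) <-> (C = 1%:M \/ C = A).
Proof.
move=> kB; have B1B : B *m 1%:M *m B = 1%:M by rewrite mulmx1 klein_sqr.
have CE : C = B *m (B *m C *m B) *m B.
  by rewrite !mulmxA klein_sqr // mul1mx -mulmxA klein_sqr // mulmx1.
split=> [[] E | [] ->].
- by left; rewrite CE E B1B.
- by right; rewrite CE E klein_conj_Aswap.
- by left.
- by right; rewrite klein_conj_Aswap.
Qed.

Lemma klein_normalizer (b : 'cV[R]_2) B : klein B ->
  b 0 0 - b 1 0 \is a Num.int -> normalizer_A (@Mcm R) (b, B).
Proof.
move=> kB bZ; split; first exact: klein_unit.
case=> v C; rewrite aff_conjE klein_inv // !McmP /cm_spec /= klein_conj_cm //.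
suff conjZ : C = 1%:M \/ C = A ->
    (b + B *m v - B *m C *m B *m b \is a mxOver Num.int) =
    (v \is a mxOver Num.int).
  by split=> -[Z CA]; split=> //; [rewrite conjZ | rewrite -conjZ].
case=> ->.
  by rewrite mulmx1 klein_sqr // mul1mx addrAC subrr add0r klein_mulmx_intE.
rewrite klein_conj_Aswap // addrAC.
by rewrite mxOverDl ?sub_mulAswap_intE // klein_mulmx_intE.
Qed.

End CmNormalizer.

Theorem lemma13 (R : realType) (b : 'cV[R]_2) (B : 'M[R]_2) :
  normalizer_A (@Mcm R) (b, B) <->
  ((exists z : int, b 0 0 - b 1 0 = z%:~R) /\
   mx_gen (fun C => C = - 1%:M \/ C = @Aswap R) B).
Proof.
have intE :
    (exists z : int, b 0 0 - b 1 0 = z%:~R) <-> b 0 0 - b 1 0 \is a Num.int.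
  by split=> [[z ->] | /intrP//]; apply: intr_int.
split=> [gN | [/intE bZ /mx_gen_kleinP kB]]; last exact: klein_normalizer.
have [U _] := gN; have [BA bAbZ] := normalizer_AswapC gN.
have [BZ BVZ] := normalizer_int gN.
split; first by apply/intE; rewrite -sub_mulAswap_intE.
exact/mx_gen_kleinP/(int_unitmx_AswapC_klein U BZ BVZ BA).
Qed.
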